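(* Let $S$ be a measurable space containing a distinguished element $0$, let $(\epsilon_i)_{i\in\mathbb{Z}}$ be an i.i.d. sequence of $S$-valued random variables, and let $f:S^\infty\to\mathbb{R}$ be bounded, with $\|f\|_\infty=\sup|f|<\infty$, satisfying: there is a decreasing sequence $(c_m)_{m\in\mathbb{N}}$ tending to $0$ such that for all $m$ and all $a_1,\ldots,a_{m+1},x_i,y_i\in S$ ($i\le 0$), $$|f(a_{m+1},\ldots,a_1,x_0,x_{-1},\ldots)-f(a_{m+1},\ldots,a_1,y_0,y_{-1},\ldots)|\le c_m\,|f(x_0,x_{-1},\ldots)-f(y_0,y_{-1},\ldots)|.$$ Define $X_n=f(\epsilon_n,\epsilon_{n-1},\ldots)$ and $X_n^{(m)}=f(\epsilon_n,\ldots,\epsilon_{n-m},0,0,\ldots)$ for $n\in\mathbb{Z}$. Let $\epsilon>0$ and let $m\in\mathbb{N}$ satisfy $2c_m\|f\|_\infty<\epsilon$. Then for every $n\ge1$, $d_H(\mathbb{X}_n^{(m)},\mathbb{X}_n)<\epsilon$ almost surely, where $\mathbb{X}_n=\{X_1,\ldots,X_n\}$ and $\mathbb{X}_n^{(m)}=\{X^{(m)}_1,\ldots,X^{(m)}_n\}$.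
   Context: $d_H$ is the Hausdorff distance between finite subsets of $\mathbb{R}$: $d_H(A,B)=\max(\max_{x\in A}\min_{y\in B}|x-y|,\max_{x\in B}\min_{y\in A}|x-y|)$. *)

From HB Require Import structures.
From mathcomp Require Import all_boot all_order all_algebra.
From mathcomp Require Import all_classical all_reals all_analysis.
Set Implicit Arguments. Unset Strict Implicit. Unset Printing Implicit Defensive.
Import Order.TTheory GRing.Theory Num.Theory.
Import numFieldNormedType.Exports.
Local Open Scope classical_set_scope.
Local Open Scope ring_scope.

Section Hausdorff.
Variable R : realType.
Definition dist_pt (x : R) (B : seq R) : R :=
  foldr (fun y acc => Num.min `|x - y| acc) `|x - head 0 B| B.
(* max_{x in A} dist(x,B)  (distances are >= 0, so 0 is a neutral start) *)
Definition dir_haus (A B : seq R) : R :=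
  foldr (fun x acc => Num.max (dist_pt x B) acc) 0 A.
Definition dH (A B : seq R) : R := Num.max (dir_haus A B) (dir_haus B A).
End Hausdorff.

Definition supnorm (R : realType) (T : Type) (f : T -> R) : R :=
  sup (range (fun x => `|f x|)).

Section SeqSpace.
Context {d : measure_display} (S : measurableType d).
Definition cylinders : set (set (nat -> S)) :=
  [set C | exists (i : nat) (A : set S), measurable A /\ C = (fun x => x i) @^-1` A].
Definition seq_measurable_fun (R : realType) (f : (nat -> S) -> R) : Prop :=
  forall B : set R, measurable B -> <<s cylinders >> (f @^-1` B).
End SeqSpace.

Section IID.
Context {d : measure_display} (S : measurableType d).
Context {dT : measure_display} (T : measurableType dT) (R : realType).
Variable P : probability T R.
Definition mutually_independent (eps : int -> T -> S) : Prop :=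
  forall (s : seq int) (A : int -> set S), uniq s ->
    (forall i, measurable (A i)) ->
    P (\big[setI/setT]_(i <- s) (eps i @^-1` A i)) =
    (\prod_(i <- s) P (eps i @^-1` A i))%E.
Definition identically_distributed (eps : int -> T -> S) : Prop :=
  forall (i j : int) (A : set S), measurable A ->
    P (eps i @^-1` A) = P (eps j @^-1` A).
Definition iid (eps : int -> T -> S) : Prop :=
  (forall i, measurable_fun setT (eps i)) /\
  mutually_independent eps /\ identically_distributed eps.
End IID.

(* X_n = f(eps_n, eps_{n-1}, ...) : coordinate k of the argument is eps_{n-k} *)
Definition Xproc {d} (S : measurableType d) (T : Type) (R : realType)
  (f : (nat -> S) -> R) (eps : int -> T -> S) (n : int) (w : T) : R :=
  f (fun k : nat => eps (n - k%:Z)%R w).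
Definition Xproc_trunc {d} (S : measurableType d) (T : Type) (R : realType)
  (s0 : S) (f : (nat -> S) -> R) (eps : int -> T -> S) (m : nat) (n : int)
  (w : T) : R :=
  f (fun k : nat => if (k <= m)%N then eps (n - k%:Z)%R w else s0).

From HB Require Import structures.
From mathcomp Require Import all_boot all_order all_algebra.
From mathcomp Require Import all_classical all_reals all_analysis.
Import Order.TTheory GRing.Theory Num.Theory.
Import numFieldNormedType.Exports.
Local Open Scope classical_set_scope.
Local Open Scope ring_scope.

(* The bound holds surely, not only almost surely.  X_k and X_k^(m) share the
   innovations eps_k, ..., eps_(k-m), so the contraction property bounds their
   difference by c_m |f(eps_(k-m-1), ...) - f(0, 0, ...)| <= 2 c_m ||f||, where
   c_m >= 0 because c decreases to 0.  Pairing X_k^(m) with X_k then puts every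
   point of each set within that distance of the other set. *)

Section HausdorffMap.
Variable R : realType.

Lemma dist_pt_le (x y : R) (B : seq R) : y \in B -> dist_pt x B <= `|x - y|.
Proof.
rewrite /dist_pt; elim: B (`|x - _|) => [//|b B IH] z.
rewrite inE => /orP[/eqP ->|yB] /=; first by rewrite ge_min lexx.
by rewrite ge_min IH ?orbT.
Qed.

Lemma dir_haus_lt (A B : seq R) (e : R) :
  0 < e -> {in A, forall x, dist_pt x B < e} -> dir_haus A B < e.
Proof.
move=> e0; elim: A => [//|a A IH] AB /=.
rewrite gt_max AB ?mem_head //= IH // => x xA.
by rewrite AB // inE xA orbT.
Qed.

Lemma dH_map_lt (I : eqType) (g h : I -> R) (s : seq I) (e : R) :
  0 < e -> {in s, forall k, `|g k - h k| < e} -> dH (map g s) (map h s) < e.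
Proof.
move=> e0 gh.
have dir_lt (u v : I -> R) : {in s, forall k, `|u k - v k| < e} ->
    dir_haus (map u s) (map v s) < e.
  move=> uv; apply: dir_haus_lt => // _ /mapP[k ks ->].
  by apply: le_lt_trans (uv k ks); apply/dist_pt_le/map_f.
rewrite /dH gt_max !dir_lt // => k ks; rewrite distrC; exact: gh.
Qed.

End HausdorffMap.

Lemma supnorm_ge (R : realType) (T : Type) (f : T -> R) :
  (exists M : R, forall x, `|f x| <= M) -> forall x, `|f x| <= supnorm f.
Proof.
move=> [M fM] x; apply: ub_le_sup; last by exists x.
by exists M => _ [y _ <-].
Qed.

Lemma nonincreasing_cvg0_ge0 (R : realType) (u : R ^nat) :
  nonincreasing_seq u -> u @ \oo --> 0 -> forall n, 0 <= u n.
Proof.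
move=> u_noninc u0 n; rewrite -(cvg_lim _ u0) //.
by apply: nonincreasing_cvgn_ge => //; apply/cvg_ex; exists 0.
Qed.

Section Truncation.
Variables (R : realType) (d : measure_display) (S : measurableType d) (s0 : S).
Variables (T : Type) (eps : int -> T -> S) (f : (nat -> S) -> R) (c : nat -> R).
Hypothesis f_bounded : exists M : R, forall x, `|f x| <= M.
Hypothesis f_contract : forall (k : nat) (a x y : nat -> S),
  `|f (fun i => if (i <= k)%N then a i else x (i - k.+1)%N)
    - f (fun i => if (i <= k)%N then a i else y (i - k.+1)%N)|
  <= c k * `|f x - f y|.

Lemma Xproc_trunc_dist (m : nat) (n : int) (w : T) : 0 <= c m ->
  `|Xproc_trunc s0 f eps m n w - Xproc f eps n w| <= 2 * c m * supnorm f.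
Proof.
move=> cm_ge0; pose past j := eps (n - (j + m.+1)%:Z) w.
have splice_past : (fun i => if (i <= m)%N then eps (n - i%:Z) w
                                else past (i - m.+1)%N) = (fun i => eps (n - i%:Z) w).
  by apply: funext => i; case: leqP => //; rewrite /past => /subnK ->.
have := f_contract m (fun i => eps (n - i%:Z) w) (fun=> s0) past.
rewrite splice_past => /le_trans; apply.
rewrite [2 * _]mulrC -mulrA; apply: ler_wpM2l => //; rewrite mulr_natl mulr2n.
by apply: le_trans (ler_normB _ _) _; apply: lerD; apply: supnorm_ge.
Qed.

End Truncation.

Theorem lemma4p1 (R : realType) (d : measure_display) (S : measurableType d)
  (s0 : S) (dT : measure_display) (T : measurableType dT)
  (P : probability T R) (eps : int -> T -> S)
  (f : (nat -> S) -> R) (c : nat -> R) (e : R) (m : nat) (n : nat) :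
  iid P eps ->
  seq_measurable_fun f ->
  (exists M : R, forall x, `|f x| <= M) ->
  (forall k l : nat, (k <= l)%N -> c l <= c k) ->
  c @ \oo --> 0 ->
  (forall (k : nat) (a x y : nat -> S),
     `|f (fun i => if (i <= k)%N then a i else x (i - k.+1)%N)
       - f (fun i => if (i <= k)%N then a i else y (i - k.+1)%N)|
     <= c k * `|f x - f y|) ->
  0 < e ->
  2 * c m * supnorm f < e ->
  (1 <= n)%N ->
  {ae P, forall w,
     dH [seq Xproc_trunc s0 f eps m k%:Z w | k <- iota 1 n]
        [seq Xproc f eps k%:Z w | k <- iota 1 n] < e}.
Proof.
move=> _ _ f_bounded c_noninc c0 f_contract e0 cm_lt _.
apply: aeW => w; apply: dH_map_lt => // k _.
apply: le_lt_trans cm_lt; apply: Xproc_trunc_dist => //.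
exact: nonincreasing_cvg0_ge0.
Qed.
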